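(* Let $G$ be a graph with a linear order $<$ on $V(G)$ satisfying the X-property, and let $s<t$ be vertices with $\operatorname{dist}(s,t)<\infty$. If a shortest $s$-$t$ path $P$ contains two edges $\{v,v'\}$ and $\{w,w'\}$ with $v<w<v'<w'$, then $P$ also contains the edge $\{v,w'\}$; moreover, this is the only pair of crossing edges in $P$, and every vertex $x$ of $P$ satisfies $v\le x\le w'$.
   Context: The X-property: for all vertices $p<q<r<s$, if $\{p,r\}\in E(G)$ and $\{q,s\}\in E(G)$ then $\{p,s\}\in E(G)$. $\operatorname{dist}(s,t)$ is the number of edges of a shortest $s$-$t$ path. Two edges $\{a,b\}$ and $\{c,d\}$ with $a<b$, $c<d$ are crossing if $a<c<b<d$ or $c<a<d<b$. *)

From HB Require Import structures.
From mathcomp Require Import all_boot all_order.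
Set Implicit Arguments. Unset Strict Implicit. Unset Printing Implicit Defensive.
Import Order.TTheory.
Local Open Scope order_scope.

(* A graph on a finite linearly ordered vertex set T: an adjacency relation e,
   assumed symmetric and irreflexive (simple undirected graph). *)

Definition X_property (d : Order.disp_t) (T : finOrderType d) (e : rel T) : Prop :=
  forall p q r s : T, p < q -> q < r -> r < s -> e p r -> e q s -> e p s.

Definition walk (d : Order.disp_t) (T : finOrderType d) (e : rel T) (s t : T) (p : seq T) : bool :=
  path e s p && (last s p == t).

(* A shortest s-t path: a walk from s to t of minimal length (size p = dist(s,t)). *)
Definition shortest_path (d : Order.disp_t) (T : finOrderType d) (e : rel T) (s t : T) (p : seq T) : Prop :=
  walk e s t p /\ forall p' : seq T, walk e s t p' -> size p <= size p'.

Definition path_has_edge (T : eqType) (q : seq T) (a b : T) : bool :=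
  ((a, b) \in zip q (behead q)) || ((b, a) \in zip q (behead q)).

Definition crossing (d0 : Order.disp_t) (T : finOrderType d0) (a b c d : T) : bool :=
  [&& a < c, c < b & b < d] || [&& c < a, a < d & d < b].

From HB Require Import structures.
From mathcomp Require Import all_boot all_order.
From mathcomp Require Import zify.
Import Order.TTheory.
Set Implicit Arguments. Unset Strict Implicit.

(* A shortest walk has no chords: two of its vertices are adjacent only if they
   are consecutive on it.  If the walk uses edges {a,b} and {c,d} with
   a < c < b < d, the X-property gives the edge {a,d}, so a and d are
   consecutive and the walk runs through b, a, d, c (or c, d, a, b) in a row.
   The X-property also traps the walk under an edge {u,u'}: a neighbour of a
   vertex strictly between u and u' is again strictly between them unless it is
   adjacent to u or u'.  Hence the part of the walk before b stays inside (c,d)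
   and the part after c inside (a,b) (or symmetrically), so the whole walk lies
   in [a,d].  Then a and d are the least and greatest vertices of the walk, so
   any two crossing pairs share their outer endpoints, and chord-freeness
   determines the inner ones. *)

Lemma X_trap (d : Order.disp_t) (T : finOrderType d) (e : rel T) (u u' y z : T) :
  X_property e -> symmetric e -> e u u' -> e y z -> ~~ e z u -> ~~ e z u' ->
  (u < y < u')%O -> (u < z < u')%O.
Proof.
move=> hX e_sym euu' eyz nzu nzu' /andP [uy yu'].
case: (ltgtP z u) => [zu | uz | zu_eq]; last by rewrite zu_eq euu' in nzu'.
  by rewrite (hX z u y u' zu uy yu' _ euu') // e_sym in nzu'.
case: (ltgtP z u') => [zu' | u'z | zu'_eq]; first by apply/andP.
  by rewrite e_sym (hX u y u' z uy yu' u'z euu' eyz) in nzu.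
by rewrite zu'_eq e_sym euu' in nzu.
Qed.

Lemma last_take_nth (T : Type) (x0 : T) (p : seq T) i :
  i <= size p -> last x0 (take i p) = nth x0 (x0 :: p) i.
Proof.
case: i => [|i] hi; first by rewrite take0.
by rewrite (last_nth x0) size_takel //= nth_take.
Qed.

Lemma path_has_edge_sym (T : eqType) (q : seq T) a b :
  path_has_edge q a b = path_has_edge q b a.
Proof. by rewrite /path_has_edge orbC. Qed.

Lemma adjacent_chain_consecutive (ia ib ic id : nat) :
  ib = ia.+1 \/ ia = ib.+1 -> id = ic.+1 \/ ic = id.+1 -> id = ia.+1 \/ ia = id.+1 ->
  ib <> id -> ic <> ia -> ib <> ic ->
  ia = ib.+1 /\ id = ib.+2 /\ ic = ib.+3 \/ id = ic.+1 /\ ia = ic.+2 /\ ib = ic.+3.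
Proof. lia. Qed.

Section Walks.
Variables (d : Order.disp_t) (T : finOrderType d) (e : rel T).

Lemma walk_cat (s m t : T) (p1 p2 : seq T) :
  walk e s m p1 -> walk e m t p2 -> walk e s t (p1 ++ p2).
Proof. by rewrite /walk cat_path last_cat => /andP [-> /eqP ->]. Qed.

Variables (s t : T) (P : seq T).
Local Notation x i := (nth s (s :: P) i).

Lemma size_zip_behead : size (zip (s :: P) P) = size P.
Proof. by rewrite size_zip /=; lia. Qed.

Lemma walk_edge i : path e s P -> i < size P -> e (x i) (x i.+1).
Proof. by move=> /(pathP s) + hi => /(_ i hi). Qed.

Lemma walk_take i : path e s P -> i <= size P -> walk e s (x i) (take i P).
Proof. by move=> sP hi; rewrite /walk (take_path _ sP) last_take_nth ?eqxx. Qed.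

Lemma walk_drop i : walk e s t P -> i <= size P -> walk e (x i) t (drop i P).
Proof.
move=> + hi; rewrite /walk -{1 2}(cat_take_drop i P) cat_path last_cat.
by rewrite last_take_nth // => /andP [/andP [_ ->]].
Qed.

Lemma path_has_edge_nth a b :
  path_has_edge (s :: P) a b -> exists ia ib,
    [/\ ia <= size P, ib <= size P, x ia = a, x ib = b
      & ib = ia.+1 \/ ia = ib.+1].
Proof.
rewrite /path_has_edge /= => /orP [] /(nthP (s, s)) [i];
  rewrite size_zip_behead => hi; rewrite nth_zip_cond size_zip_behead hi => -[<- <-].
- by exists i, i.+1; split; rewrite ?(ltnW hi) //; left.
- by exists i.+1, i; split; rewrite ?(ltnW hi) //; right.
Qed.

Lemma path_has_edge_consecutive i :
  i < size P -> path_has_edge (s :: P) (x i) (x i.+1).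
Proof.
move=> hi; rewrite /path_has_edge /=; apply/orP; left; apply/(nthP (s, s)).
exists i; first by rewrite size_zip_behead.
by rewrite nth_zip_cond size_zip_behead hi.
Qed.

Lemma path_has_edge_rel a b :
  symmetric e -> path e s P -> path_has_edge (s :: P) a b -> e a b.
Proof.
move=> e_sym sP /path_has_edge_nth [ia [ib [hia hib <- <- [ib_ia | ia_ib]]]].
  by rewrite ib_ia in hib *; apply: walk_edge.
by rewrite e_sym ia_ib in hia *; apply: walk_edge.
Qed.

Lemma path_has_edge_mem a b :
  path_has_edge (s :: P) a b -> a \in s :: P /\ b \in s :: P.
Proof. by case/path_has_edge_nth=> ia [ib [hia hib <- <- _]]; rewrite !mem_nth. Qed.

End Walks.

Section ShortestPath.
Variables (d : Order.disp_t) (T : finOrderType d) (e : rel T) (s t : T) (P : seq T).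
Hypotheses (e_sym : symmetric e) (e_irr : irreflexive e) (hP : shortest_path e s t P).
Local Notation n := (size P).
Local Notation x i := (nth s (s :: P) i).

Let sP : path e s P. Proof. by case: hP => /andP []. Qed.

Lemma shortest_path_adj i j : i <= n -> j <= n -> e (x i) (x j) -> j = i.+1 \/ i = j.+1.
Proof.
wlog lt_ij : i j / i < j => [wlog_lt hi hj eij|hi hj eij].
  case: (ltngtP i j) => [lt_ij | lt_ji | eq_ij]; first exact: wlog_lt.
    by rewrite e_sym in eij; case: (wlog_lt j i lt_ji hj hi eij); [right | left].
  by rewrite eq_ij e_irr in eij.
left; apply/eqP; rewrite eqn_leq lt_ij andbT leqNgt; apply/negP => far_ij.
have shortcut : walk e s t (take i P ++ x j :: drop j P).
  apply: walk_cat (walk_take sP hi) _.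
  by rewrite /walk /= eij -/(walk e (x j) t _) (walk_drop hP.1).
have := hP.2 _ shortcut; rewrite size_cat size_takel // /= size_drop; lia.
Qed.

Lemma shortest_path_nonadj i j : j <= n -> i.+2 <= j -> ~~ e (x i) (x j).
Proof. by move=> hj ij; apply/negP => /(shortest_path_adj _ hj) []; lia. Qed.

Lemma shortest_path_nbr i y : i <= n -> y \in s :: P -> e (x i) y ->
  y = x i.+1 \/ y = x i.-1.
Proof.
move=> hi /(nthP s) [j hj <-] /(shortest_path_adj hi hj) [-> | ->];
  [left | right]; reflexivity.
Qed.

Hypothesis hX : X_property e.

Lemma trapped_before u u' m : m <= n -> e u u' ->
  (forall l, l <= m -> ~~ e (x l) u && ~~ e (x l) u') ->
  (u < x m < u')%O -> forall l, l <= m -> (u < x l < u')%O.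
Proof.
move=> + euu'; elim: m => [|m IH] hm far xm l; first by rewrite leqn0 => /eqP ->.
rewrite leq_eqVlt => /orP [/eqP -> // | /IH]; apply=> [|j jm|]; first exact: ltnW.
  by apply: far; apply: leqW.
have /andP [nu nu'] := far m (leqnSn m).
by apply: (X_trap hX e_sym euu' _ nu nu' xm); rewrite e_sym walk_edge.
Qed.

Lemma trapped_after u u' m : e u u' ->
  (forall l, m <= l -> l <= n -> ~~ e u (x l) && ~~ e u' (x l)) ->
  (u < x m < u')%O -> forall l, m <= l -> l <= n -> (u < x l < u')%O.
Proof.
move=> euu' far xm; elim=> [|l IH]; first by rewrite leqn0 => /eqP <-.
rewrite leq_eqVlt => /orP [/eqP <- // | ml] ln.
have /andP [nu nu'] := far _ (ltnW ml) ln.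
rewrite ![e _ (x l.+1)]e_sym in nu nu'.
exact: (X_trap hX e_sym euu' (walk_edge sP ln) nu nu' (IH ml (ltnW ln))).
Qed.

Lemma crossing_consecutive a b c d0 : (a < c)%O -> (c < b)%O -> (b < d0)%O ->
  path_has_edge (s :: P) a b -> path_has_edge (s :: P) c d0 ->
  exists2 k, k.+3 <= n &
    [/\ x k = b, x k.+1 = a, x k.+2 = d0 & x k.+3 = c] \/
    [/\ x k = c, x k.+1 = d0, x k.+2 = a & x k.+3 = b].
Proof.
move=> ac cb bd hab hcd.
have ead : e a d0 :=
  hX ac cb bd (path_has_edge_rel e_sym sP hab) (path_has_edge_rel e_sym sP hcd).
have [ia [ib [hia hib xa xb ab]]] := path_has_edge_nth hab.
have [ic [id [hic hid xc xd cd]]] := path_has_edge_nth hcd.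
have ad : id = ia.+1 \/ ia = id.+1 by apply: shortest_path_adj; rewrite ?xa ?xd.
have ib_id : ib <> id by move=> E; move: bd; rewrite -xb -xd E ltxx.
have ic_ia : ic <> ia by move=> E; move: ac; rewrite -xa -xc E ltxx.
have ib_ic : ib <> ic by move=> E; move: cb; rewrite -xb -xc E ltxx.
case: (adjacent_chain_consecutive ab cd ad ib_id ic_ia ib_ic)
  => [[Ea [Ed Ec]] | [Ed [Ea Eb]]].
  by exists ib; subst; [| left].
by exists ic; subst; [| right].
Qed.

Lemma crossing_range a b c d0 : (a < c)%O -> (c < b)%O -> (b < d0)%O ->
  path_has_edge (s :: P) a b -> path_has_edge (s :: P) c d0 ->
  {in s :: P, forall y, (a <= y <= d0)%O}.
Proof.
move=> ac cb bd hab hcd _ /(nthP s) [l hl <-]; have {}hl : l <= n := hl.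
have eab := path_has_edge_rel e_sym sP hab; have ecd := path_has_edge_rel e_sym sP hcd.
have inside_ab y : (a < y < b)%O -> (a <= y <= d0)%O.
  by case/andP=> ay yb; rewrite (ltW ay) (ltW (lt_trans yb bd)).
have inside_cd y : (c < y < d0)%O -> (a <= y <= d0)%O.
  by case/andP=> cy yd; rewrite (ltW (lt_trans ac cy)) (ltW yd).
have ad : (a <= d0)%O := ltW (lt_trans ac (lt_trans cb bd)).
have [k hk pattern] := crossing_consecutive ac cb bd hab hcd.
have hk2 := ltnW hk; have hk0 : k <= n := ltnW (ltnW hk2).
have [lk | [-> | [-> | kl]]] : l <= k \/ l = k.+1 \/ l = k.+2 \/ k.+3 <= l.
  by clear -l k; lia.
- case: pattern => [[xb _ xd xc] | [xc _ xa xb]].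
    apply: inside_cd; apply: (trapped_before hk0 ecd) lk => [j jk|].
      rewrite -xc -xd (shortest_path_nonadj (i := j) hk (leqW jk)).
      by rewrite (shortest_path_nonadj hk2 jk).
    by rewrite xb cb bd.
  apply: inside_ab; apply: (trapped_before hk0 eab) lk => [j jk|].
    rewrite -xa -xb (shortest_path_nonadj (i := j) hk (leqW jk)).
    by rewrite (shortest_path_nonadj hk2 jk).
  by rewrite xc ac cb.
- by case: pattern => [[_ -> _ _] | [_ -> _ _]]; rewrite lexx ad.
- by case: pattern => [[_ _ -> _] | [_ _ -> _]]; rewrite lexx ad.
- case: pattern => [[xb xa _ xc] | [xc xd _ xb]].
    apply: inside_ab; apply: (trapped_after eab) kl hl => [j kj jn|].
      by rewrite -xa -xb (shortest_path_nonadj jn kj) (shortest_path_nonadj jn (ltnW kj)).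
    by rewrite xc ac cb.
  apply: inside_cd; apply: (trapped_after ecd) kl hl => [j kj jn|].
    by rewrite -xc -xd (shortest_path_nonadj jn kj) (shortest_path_nonadj jn (ltnW kj)).
  by rewrite xb cb bd.
Qed.

Lemma crossing_unique a b c d0 v v' w w' :
  (a < c)%O -> (c < b)%O -> (b < d0)%O -> (v < w)%O -> (w < v')%O -> (v' < w')%O ->
  path_has_edge (s :: P) a b -> path_has_edge (s :: P) c d0 ->
  path_has_edge (s :: P) v v' -> path_has_edge (s :: P) w w' ->
  (a, b) = (v, v') /\ (c, d0) = (w, w').
Proof.
move=> ac cb bd vw wv' v'w' hab hcd hvv' hww'.
have range_ad := crossing_range ac cb bd hab hcd.
have range_vw := crossing_range vw wv' v'w' hvv' hww'.
have [mem_a _] := path_has_edge_mem hab; have [_ mem_d] := path_has_edge_mem hcd.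
have [mem_v mem_v'] := path_has_edge_mem hvv'; have [mem_w mem_w'] := path_has_edge_mem hww'.
have av : a = v.
  by apply/le_anti; rewrite (andP (range_ad _ mem_v)).1 (andP (range_vw _ mem_a)).1.
have dw' : d0 = w'.
  by apply/le_anti; rewrite (andP (range_ad _ mem_w')).2 (andP (range_vw _ mem_d)).2.
subst v w'.
have eav' := path_has_edge_rel e_sym sP hvv'.
have edw : e d0 w by rewrite e_sym (path_has_edge_rel e_sym sP hww').
have [k hk pattern] := crossing_consecutive ac cb bd hab hcd.
have hk2 := ltnW hk; have hk1 := ltnW hk2.
case: pattern => [[xb xa xd xc] | [xc xd xa xb]]; rewrite -xa in eav'; rewrite -xd in edw.
- have [v'_d | ->] := shortest_path_nbr hk1 mem_v' eav'.
    by move: v'w'; rewrite v'_d xd ltxx.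
  have [-> | w_a] := shortest_path_nbr hk2 mem_w edw.
    by rewrite xb xc.
  by move: vw; rewrite w_a xa ltxx.
- have [-> | v'_d] := shortest_path_nbr hk2 mem_v' eav'.
    have [w_a | ->] := shortest_path_nbr hk1 mem_w edw.
      by move: vw; rewrite w_a xa ltxx.
    by rewrite xb xc.
  by move: v'w'; rewrite v'_d xd ltxx.
Qed.

End ShortestPath.

Local Open Scope order_scope.

Theorem lemma6 (d : Order.disp_t) (T : finOrderType d) (e : rel T)
  (e_sym : symmetric e) (e_irr : irreflexive e) (hX : X_property e)
  (s t : T) (hst : s < t) (P : seq T) (hP : shortest_path e s t P)
  (v v' w w' : T)
  (hvv' : path_has_edge (s :: P) v v') (hww' : path_has_edge (s :: P) w w')
  (h1 : v < w) (h2 : w < v') (h3 : v' < w') :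
  [/\ path_has_edge (s :: P) v w',
      (forall a b c d0 : T, a < b -> c < d0 ->
         path_has_edge (s :: P) a b -> path_has_edge (s :: P) c d0 ->
         crossing a b c d0 ->
         ((a, b) = (v, v') /\ (c, d0) = (w, w')) \/
         ((a, b) = (w, w') /\ (c, d0) = (v, v')))
    & forall x : T, x \in s :: P -> v <= x <= w'].
Proof.
split.
- have [k hk [[_ <- <- _] | [_ <- <- _]]] :=
    crossing_consecutive e_sym e_irr hP hX h1 h2 h3 hvv' hww'.
    exact: path_has_edge_consecutive (ltnW hk).
  by rewrite path_has_edge_sym; apply: path_has_edge_consecutive (ltnW hk).
- move=> a b c d0 _ _ hab hcd /orP [/and3P [ac cb bd] | /and3P [ca ad db]].
    by left; apply: (crossing_unique e_sym e_irr hP hX ac cb bd h1 h2 h3 hab hcd hvv' hww').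
  by right; case: (crossing_unique e_sym e_irr hP hX ca ad db h1 h2 h3 hcd hab hvv' hww')
    => -> ->.
- exact: (crossing_range e_sym e_irr hP hX h1 h2 h3 hvv' hww').
Qed.
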